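(* Let $(N,v)$ be a balanced game. If the core $C(N,v)$ is a stable set, then the collection $\mathscr{VE}(N,v)$ of strictly vital-exact coalitions is core-describing, i.e., $$C(N,v)=\{x\in X(N,v)\mid x(S)\ge v(S)\ \forall S\in\mathscr{VE}(N,v)\}.$$
   Context: A game $(N,v)$: $N$ finite nonempty, $v:2^N\to\mathbb{R}$, $v(\varnothing)=0$; $x(S)=\sum_{i\in S}x_i$. Preimputations $X(N,v)=\{x\in\mathbb{R}^N\mid x(N)=v(N)\}$; imputations $I(N,v)=\{x\in X(N,v)\mid x_i\ge v(\{i\})\ \forall i\in N\}$. Core: $C(N,v)=\{x\in X(N,v)\mid x(S)\ge v(S)\ \forall S\subseteq N\}$; balanced means nonempty core. For preimputations $x,y$ and a coalition $S$, $x$ dominates $y$ via $S$ if $x(S)\le v(S)$ and $x_i>y_i$ for all $i\in S$; $x$ dominates $y$ if this holds for some coalition $S$. A set $U\subseteq I(N,v)$ is a stable set if (i) no element of $U$ is dominated by an element of $U$, and (ii) every $y\in I(N,v)\setminus U$ is dominated by some $x\in U$. A coalition $S$ is strictly vital-exact if there exists $x\in C(N,v)$ with $x(S)=v(S)$ and $x(T)>v(T)$ for all $T\in 2^S\setminus\{\varnothing,S\}$. *)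

From HB Require Import structures.
From mathcomp Require Import all_boot all_order all_algebra.
From mathcomp Require Import reals.
Set Implicit Arguments. Unset Strict Implicit. Unset Printing Implicit Defensive.
Import Order.TTheory GRing.Theory Num.Theory.
Local Open Scope ring_scope.

Section Games.
Variables (R : realType) (N : finType).

Definition is_game (v : {set N} -> R) : Prop := v set0 = 0.

Definition xsum (x : N -> R) (S : {set N}) : R := \sum_(i in S) x i.

Definition preimputation (v : {set N} -> R) (x : N -> R) : Prop :=
  xsum x [set: N] = v [set: N].

Definition imputation (v : {set N} -> R) (x : N -> R) : Prop :=
  preimputation v x /\ forall i : N, v [set i] <= x i.

Definition core (v : {set N} -> R) (x : N -> R) : Prop :=
  preimputation v x /\ forall S : {set N}, v S <= xsum x S.

Definition balanced (v : {set N} -> R) : Prop := exists x, core v x.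

Definition dominates_via (v : {set N} -> R) (x y : N -> R) (S : {set N}) : Prop :=
  S != set0 /\ xsum x S <= v S /\ forall i, i \in S -> y i < x i.

Definition dominates (v : {set N} -> R) (x y : N -> R) : Prop :=
  exists S : {set N}, dominates_via v x y S.

Definition stable_set (v : {set N} -> R) (U : (N -> R) -> Prop) : Prop :=
  (forall x, U x -> imputation v x) /\
  (forall x y, U x -> U y -> ~ dominates v x y) /\
  (forall y, imputation v y -> ~ U y -> exists2 x, U x & dominates v x y).

Definition strictly_vital_exact (v : {set N} -> R) (S : {set N}) : Prop :=
  exists x, [/\ core v x, xsum x S = v S &
    forall T : {set N}, T \subset S -> T != set0 -> T != S -> v T < xsum x T].

End Games.

From HB Require Import structures.
From mathcomp Require Import all_boot all_order all_algebra.
From mathcomp Require Import reals.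
From Stdlib Require Import Classical.
From mathcomp Require Import lra.
Import Order.TTheory GRing.Theory Num.Theory.
Set Implicit Arguments. Unset Strict Implicit. Unset Printing Implicit Defensive.
Local Open Scope ring_scope.

(* A core element dominating y via S is exact on a minimal nonempty subcoalition
   T of S with c(T) <= v(T); such a T is strictly vital-exact and y violates it.
   So, when the core is externally stable, the strictly vital-exact constraints
   already cut the core out of the imputations.  To get rid of individual
   rationality, move from a core element z towards a preimputation x satisfying
   these constraints and stop at the first player j whose individual rationality
   becomes tight: that point lies in the core, {j} is then strictly vital-exact,
   and its constraint forces x_j >= v({j}). *)

Section Segment.
Variables (R : realType) (N : finType).

Definition segment (z x : N -> R) (t : R) : N -> R := fun k => z k + t * (x k - z k).

Lemma xsum_segment (z x : N -> R) t S :
  xsum (segment z x t) S = xsum z S + t * (xsum x S - xsum z S).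
Proof. by rewrite /xsum big_split /= -mulr_sumr sumrB. Qed.

Lemma ler_segment (t a p q : R) :
  0 <= t <= 1 -> a <= p -> a <= q -> a <= p + t * (q - p).
Proof.
move=> /andP [t0 t1] ap aq.
have : 0 <= t * (q - a) by rewrite mulr_ge0 // subr_ge0.
have : 0 <= (1 - t) * (p - a) by rewrite mulr_ge0 // subr_ge0.
lra.
Qed.

Lemma segment_ge (z x : N -> R) t (a : R) S : 0 <= t <= 1 ->
  a <= xsum z S -> a <= xsum x S -> a <= xsum (segment z x t) S.
Proof. by rewrite xsum_segment; apply: ler_segment. Qed.

(* The exit point is given by the smallest ratio (z_k - b_k) / (z_k - x_k)
   over the players k with x_k < b_k. *)
Lemma segment_exit (b z x : N -> R) (i : N) :
  (forall k, b k <= z k) -> x i < b i ->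
  exists t j, [/\ 0 <= t <= 1, x j < b j, segment z x t j = b j &
                  forall k, b k <= segment z x t k].
Proof.
move=> bz xbi.
pose f k := (z k - b k) / (z k - x k).
have [j xbj jmin] := @arg_minP _ _ _ i [pred k | x k < b k] f xbi.
have gap k : x k < b k -> 0 < z k - x k.
  by move=> xbk; rewrite subr_gt0 (lt_le_trans xbk).
have dj := gap j xbj.
have t01 : 0 <= f j <= 1.
  rewrite divr_ge0 ?subr_ge0 ?bz ?(ltW (lt_le_trans xbj (bz j))) //=.
  by rewrite ler_pdivrMr // mul1r lerD2l lerN2 ltW.
exists (f j), j; split=> //.
  by rewrite /segment -opprB mulrN divfK ?lt0r_neq0 // opprB addrC subrK.
move=> k; rewrite /segment; have [xbk | bxk] := ltP (x k) (b k).
  by have := jmin k xbk; rewrite /f ler_pdivlMr ?gap //; lra.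
exact: ler_segment.
Qed.

End Segment.

Section CoreDescription.
Variables (R : realType) (N : finType) (v : {set N} -> R).

Lemma xsum_set1 (x : N -> R) j : xsum x [set j] = x j.
Proof. by rewrite /xsum big_set1. Qed.

Lemma strictly_vital_exact_set1 (x : N -> R) j : core v x -> x j = v [set j] ->
  strictly_vital_exact v [set j].
Proof.
move=> xc xj; exists x; split; rewrite ?xsum_set1 //.
by move=> T; rewrite subset1 => /orP [/eqP -> _ /eqP | /eqP -> /eqP].
Qed.

Lemma core_dominates_via_sve (c y : N -> R) (S : {set N}) :
  core v c -> dominates_via v c y S ->
  exists2 T, strictly_vital_exact v T & xsum y T < v T.
Proof.
move=> [cpre cge] [S0 [cS yc]].
pose P (T : {set N}) := [&& T \subset S, T != set0 & xsum c T <= v T].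
have PS : P S by rewrite /P subxx S0 cS.
have [T /and3P [TS T0 cT] Tmin] := @arg_minP _ _ _ S P (fun T => #|T|) PS.
have cTe : xsum c T = v T by apply/le_anti; rewrite cT cge.
exists T.
  exists c; split=> // U UT U0 UnT; rewrite ltNge; apply/negP => cU.
  have TU : (#|T| <= #|U|)%N by apply: Tmin; rewrite /P U0 cU (subset_trans UT TS).
  have /proper_card : U \proper T by rewrite properEneq UnT.
  by rewrite ltnNge TU.
rewrite -cTe /xsum; apply: ltr_sum => [|i iT]; last exact/yc/(subsetP TS).
by case/set0Pn: T0 => i iT; apply/hasP; exists i; rewrite ?mem_index_enum.
Qed.

Hypothesis core_ext_stable :
  forall y, imputation v y -> ~ core v y -> exists2 x, core v x & dominates v x y.

Definition sve_feasible (x : N -> R) :=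
  forall S, strictly_vital_exact v S -> v S <= xsum x S.

Lemma imputation_sve_core (y : N -> R) : imputation v y -> sve_feasible y -> core v y.
Proof.
move=> yi yS; apply: NNPP => ync.
have [c cc [S dS]] := core_ext_stable yi ync.
have [T Tsve yT] := core_dominates_via_sve cc dS.
by move: (yS T Tsve); rewrite leNgt yT.
Qed.

Lemma preimputation_sve_imputation x : balanced v ->
  preimputation v x -> sve_feasible x -> imputation v x.
Proof.
move=> [z [zpre zge]] xpre xS; split=> // i; rewrite leNgt; apply/negP => xi.
have zi k : v [set k] <= z k by rewrite -xsum_set1 zge.
have [t [j [t01 xj wj wi]]] := segment_exit zi xi.
have wc : core v (segment z x t).
  apply: imputation_sve_core; last by move=> S /xS; exact/segment_ge/zge.
  by split=> //; rewrite /preimputation xsum_segment zpre xpre subrr mulr0 addr0.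
by move: (xS _ (strictly_vital_exact_set1 wc wj)); rewrite xsum_set1 leNgt xj.
Qed.

End CoreDescription.

Theorem proposition7p2 (R : realType) (N : finType) (v : {set N} -> R) :
  (0 < #|N|)%N ->
  is_game v ->
  balanced v ->
  stable_set v (core v) ->
  forall x : N -> R,
    core v x <->
    (preimputation v x /\
     forall S : {set N}, strictly_vital_exact v S -> v S <= xsum x S).
Proof.
move=> _ _ bal [_ [_ ext]] x; split=> [[xpre xge] | [xpre xS]].
  by split=> // S _; exact: xge.
have xi := preimputation_sve_imputation ext bal xpre xS.
exact: imputation_sve_core ext _ xi xS.
Qed.
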